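(* Let $\mathsf V$ be a quantale, $X=(X,a)$ a $\mathsf V$-category, $s=(x_n)_{n\in\mathbb N}$ a sequence in $X$ and $x\in X$. Then $$\bigvee_{N\in\mathbb N}\bigwedge_{n\ge N}a(x_n,x)\ \ge\ \mathrm{Cauchy}(s)\otimes\bigwedge_{N\in\mathbb N}\bigvee_{n\ge N}a(x_n,x).$$
   Context: A quantale $(\mathsf V,\otimes,k)$ is a complete anti-symmetric lattice with an associative, commutative operation $\otimes$ with neutral element $k$ distributing over arbitrary suprema. A $\mathsf V$-category $(X,a)$ is a set with $a:X\times X\to\mathsf V$ such that $k\le a(x,x)$ and $a(x,y)\otimes a(y,z)\le a(x,z)$. For a sequence $s=(x_n)$, $\mathrm{Cauchy}(s)=\bigvee_{N}\bigwedge_{n,m\ge N}a(x_n,x_m)$. *)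

From Stdlib Require Import Arith.

Record Quantale := {
  qcar :> Type;
  qle : qcar -> qcar -> Prop;
  qle_refl : forall x, qle x x;
  qle_trans : forall x y z, qle x y -> qle y z -> qle x z;
  qle_antisym : forall x y, qle x y -> qle y x -> x = y;
  qsup : (qcar -> Prop) -> qcar;
  qsup_ub : forall (A : qcar -> Prop) x, A x -> qle x (qsup A);
  qsup_least : forall (A : qcar -> Prop) u,
      (forall x, A x -> qle x u) -> qle (qsup A) u;
  qten : qcar -> qcar -> qcar;
  qk : qcar;
  qten_assoc : forall x y z, qten x (qten y z) = qten (qten x y) z;
  qten_comm : forall x y, qten x y = qten y x;
  qten_k : forall x, qten x qk = x;
  qten_sup : forall x (A : qcar -> Prop),
      qten x (qsup A) = qsup (fun z => exists y, A y /\ z = qten x y)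
}.

Arguments qle {q}.
Arguments qsup {q}.
Arguments qten {q}.
Arguments qk {q}.

Definition qinf {V : Quantale} (A : V -> Prop) : V :=
  qsup (fun l => forall x, A x -> qle l x).

Definition bigsup {V : Quantale} {I : Type} (P : I -> Prop) (f : I -> V) : V :=
  qsup (fun v => exists i, P i /\ v = f i).
Definition biginf {V : Quantale} {I : Type} (P : I -> Prop) (f : I -> V) : V :=
  qinf (fun v => exists i, P i /\ v = f i).

Definition is_Vcat {V : Quantale} {X : Type} (a : X -> X -> V) : Prop :=
  (forall x, qle qk (a x x)) /\
  (forall x y z, qle (qten (a x y) (a y z)) (a x z)).

Definition Cauchy {V : Quantale} {X : Type} (a : X -> X -> V) (s : nat -> X) : V :=
  bigsup (fun _ : nat => True) (fun N =>
    biginf (fun nm : nat * nat => N <= fst nm /\ N <= snd nm)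
           (fun nm => a (s (fst nm)) (s (snd nm)))).

(* For each N, write C_N for the meet of a(x_n, x_m) over n, m >= N.  For every
   m >= N and n >= N, transitivity gives C_N (x) a(x_n, x) <= a(x_m, x); since
   the tensor distributes over joins, C_N (x) \/_{n>=N} a(x_n, x) lies below
   /\_{m>=N} a(x_m, x).  The meet over all N of the tails \/_{n>=N} a(x_n, x)
   lies below the N-th tail, and a final distribution of the tensor over the
   join defining Cauchy(s) gives the inequality. *)
From Stdlib Require Import Arith.

Section QuantaleFacts.
Variable V : Quantale.

Lemma qten_monor (t y z : V) : qle y z -> qle (qten t y) (qten t z).
Proof.
  intros Hyz.
  assert (Hz : z = qsup (fun w => w = y \/ w = z)).
  { apply qle_antisym.
    - apply qsup_ub. now right.
    - apply qsup_least. intros w [-> | ->]; [exact Hyz | apply qle_refl]. }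
  rewrite Hz, qten_sup. apply qsup_ub. exists y. split; [now left | reflexivity].
Qed.

Lemma qten_monol (t y z : V) : qle y z -> qle (qten y t) (qten z t).
Proof. intros Hyz. rewrite !(qten_comm V _ t). now apply qten_monor. Qed.

Lemma qinf_lb (A : V -> Prop) (x : V) : A x -> qle (qinf A) x.
Proof. intros Hx. apply qsup_least. intros l Hl. now apply Hl. Qed.

Lemma qinf_glb (A : V -> Prop) (l : V) :
  (forall x, A x -> qle l x) -> qle l (qinf A).
Proof. intros H. now apply qsup_ub. Qed.

Variable I : Type.
Variables (P : I -> Prop) (f : I -> V).

Lemma le_bigsup (v : V) (i : I) : P i -> qle v (f i) -> qle v (bigsup P f).
Proof.
  intros Hi Hv. apply qle_trans with (f i); [exact Hv |].
  apply qsup_ub. now exists i.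
Qed.

Lemma biginf_le (v : V) (i : I) : P i -> qle (f i) v -> qle (biginf P f) v.
Proof.
  intros Hi Hv. apply qle_trans with (f i); [| exact Hv].
  apply qinf_lb. now exists i.
Qed.

Lemma biginf_glb (l : V) : (forall i, P i -> qle l (f i)) -> qle l (biginf P f).
Proof. intros H. apply qinf_glb. intros v [i [Hi ->]]. now apply H. Qed.

Lemma qten_bigsupr_le (t u : V) :
  (forall i, P i -> qle (qten t (f i)) u) -> qle (qten t (bigsup P f)) u.
Proof.
  intros H. unfold bigsup. rewrite qten_sup. apply qsup_least.
  intros z [y [[i [Hi ->]] ->]]. now apply H.
Qed.

Lemma qten_bigsupl_le (t u : V) :
  (forall i, P i -> qle (qten (f i) t) u) -> qle (qten (bigsup P f) t) u.
Proof.
  intros H. rewrite qten_comm. apply qten_bigsupr_le.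
  intros i Hi. rewrite qten_comm. now apply H.
Qed.

End QuantaleFacts.

Section CauchyTails.
Variables (V : Quantale) (X : Type) (a : X -> X -> V).
Hypothesis a_trans : forall x y z, qle (qten (a x y) (a y z)) (a x z).
Variables (s : nat -> X) (x : X).

Definition cauchy_tail (N : nat) : V :=
  biginf (fun nm : nat * nat => N <= fst nm /\ N <= snd nm)
         (fun nm => a (s (fst nm)) (s (snd nm))).

Lemma cauchy_tail_ten_sup_le (N : nat) :
  qle (qten (cauchy_tail N) (bigsup (fun n => N <= n) (fun n => a (s n) x)))
      (biginf (fun n => N <= n) (fun n => a (s n) x)).
Proof.
  apply biginf_glb. intros m Hm.
  apply qten_bigsupr_le. intros n Hn.
  apply qle_trans with (qten (a (s m) (s n)) (a (s n) x)); [| apply a_trans].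
  apply qten_monol. apply biginf_le with (i := (m, n)); [now split | apply qle_refl].
Qed.

End CauchyTails.

Arguments cauchy_tail {V X} a s N.

Theorem lemma3p11 (V : Quantale) (X : Type) (a : X -> X -> V)
  (Ha : is_Vcat a) (s : nat -> X) (x : X) :
  qle (qten (Cauchy a s)
            (biginf (fun _ : nat => True) (fun N =>
               bigsup (fun n : nat => N <= n) (fun n => a (s n) x))))
      (bigsup (fun _ : nat => True) (fun N =>
         biginf (fun n : nat => N <= n) (fun n => a (s n) x))).
Proof.
  destruct Ha as [_ a_trans].
  apply qten_bigsupl_le. intros N _.
  apply le_bigsup with (i := N); [exact I |].
  apply qle_trans with (qten (cauchy_tail a s N)
                             (bigsup (fun n => N <= n) (fun n => a (s n) x))).
  - apply qten_monor. apply biginf_le with (i := N); [exact I | apply qle_refl].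
  - now apply (cauchy_tail_ten_sup_le V X a a_trans s x N).
Qed.
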